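(* For every expression $e$ and every $d\in\mathbb{N}$: if $\mathrm{WF}_d(e)$ then $\mathrm{WF}_d(\uparrow_d e)$.
   Context: Expressions are terms $e ::= \lambda.\,e \mid (e\ e)\mid \$i \mid \&i\mid t$, where $\$i$ ($i\in\mathbb{N}$) is a de Bruijn index, $\&i$ ($i\in\mathbb{Z}$) is a special ''overshifted'' variable, and $t$ ranges over primitive symbols. The upshift $\uparrow_d$ is defined by: $\uparrow_d(\lambda.b)=\lambda.\uparrow_{d+1}b$; $\uparrow_d(f\ x)=(\uparrow_d f)(\uparrow_d x)$; $\uparrow_d\$i=\$i$ if $i<d$ and $\$(i+1)$ if $i\ge d$; $\uparrow_d\&i=\&(i+1)$ if $i+1\ne d$ and $\$(i+1)$ if $i+1=d$; $\uparrow_d t=t$. Well-formedness at depth $d$: $\mathrm{WF}_d(\lambda.b)=\mathrm{WF}_{d+1}(b)$; $\mathrm{WF}_d(f\ x)=\mathrm{WF}_d(f)\wedge\mathrm{WF}_d(x)$; $\mathrm{WF}_d(\$i)$ is true; $\mathrm{WF}_d(\&i)$ is true iff $i<d$; $\mathrm{WF}_d(t)$ is true. *)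

From Stdlib Require Import Arith ZArith.
Open Scope Z_scope.

(* Expressions with de Bruijn indices $i (i : nat), overshifted variables &i (i : Z),
   and primitive symbols drawn from an arbitrary type Sym. *)
Inductive expr (Sym : Type) : Type :=
| Lam : expr Sym -> expr Sym
| App : expr Sym -> expr Sym -> expr Sym
| Var : nat -> expr Sym
| Over : Z -> expr Sym
| Prim : Sym -> expr Sym.

Arguments Lam {Sym} _.
Arguments App {Sym} _ _.
Arguments Var {Sym} _.
Arguments Over {Sym} _.
Arguments Prim {Sym} _.

Fixpoint upshift {Sym : Type} (d : nat) (e : expr Sym) : expr Sym :=
  match e with
  | Lam b => Lam (upshift (S d) b)
  | App f x => App (upshift d f) (upshift d x)
  | Var i => if Nat.ltb i d then Var i else Var (S i)
  | Over i => if Z.eqb (i + 1) (Z.of_nat d) then Var d else Over (i + 1)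
  | Prim t => Prim t
  end.

Fixpoint WF {Sym : Type} (d : nat) (e : expr Sym) : Prop :=
  match e with
  | Lam b => WF (S d) b
  | App f x => WF d f /\ WF d x
  | Var _ => True
  | Over i => i < Z.of_nat d
  | Prim _ => True
  end.

From Stdlib Require Import ZArith Lia.

Lemma WF_upshift_Over (Sym : Type) (d : nat) (i : Z) :
  i < Z.of_nat d -> WF d (upshift d (@Over Sym i)).
Proof.
  intros Hi; simpl.
  destruct (Z.eqb_spec (i + 1) (Z.of_nat d)); simpl; [trivial | lia].
Qed.

Theorem lemmaB1 (Sym : Type) (e : expr Sym) (d : nat) :
  WF d e -> WF d (upshift d e).
Proof.
  revert d; induction e as [b IHb | f IHf x IHx | i | i | t]; intros d Hwf.
  - exact (IHb (S d) Hwf).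
  - destruct Hwf as [Hf Hx]; split; [exact (IHf d Hf) | exact (IHx d Hx)].
  - simpl; destruct (Nat.ltb i d); exact I.
  - exact (WF_upshift_Over Sym d i Hwf).
  - exact I.
Qed.
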